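(* If $(x,y)$ and $(x,y')$ are both $\mathbf{x}$-vertices of $S$, then $d_S((x,y),(x,y'))\le d(\bar B)$.
   Context: Let $A\in\mathbb{R}^{m_1\times n_1}$, $a_1,a_2\in\mathbb{R}^{1\times n_1}$, $b_1,b_2\in\mathbb{R}^{1\times n_2}$, $B\in\mathbb{R}^{m_2\times n_2}$, $c_A\in\mathbb{R}^{m_1}$, $c_B\in\mathbb{R}^{m_2}$, and scalars $c_a^1,c_a^2,c_b^1,c_b^2$. Consider the ($3$-sum) polyhedron $S=\{(x,y)\in\mathbb{R}^{n_1}\times\mathbb{R}^{n_2}: Ax=c_A,\ a_1x+b_1y=c_a^1+c_b^1,\ a_2x+b_2y=c_a^2+c_b^2,\ By=c_B,\ x,y\ge 0\}$, assumed simple (nondegenerate). Let $P_A=\{x: Ax=c_A, x\ge 0\}$ and $\bar B=\begin{bmatrix}b_1\\ b_2\\ B\end{bmatrix}$. A vertex $(x,y)$ of $S$ is an $\mathbf{x}$-vertex if $x$ is a vertex of $P_A$. $d_S(v,w)$ is the minimum number of edges of an edge walk in $S$ from $v$ to $w$. For a polyhedron $P$, $d(P)$ is its combinatorial diameter, and for a matrix $M\in\mathbb{R}^{m\times n}$, $d(M):=\max\{d(\{z: Mz=r, z\ge 0\}): r\in\mathbb{R}^m\}$. *)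

From HB Require Import structures.
From mathcomp Require Import all_boot all_order all_algebra.
Set Implicit Arguments. Unset Strict Implicit. Unset Printing Implicit Defensive.
Import Order.TTheory GRing.Theory Num.Theory.
Local Open Scope ring_scope.

Section Polyhedra.
Variable R : realFieldType.

Definition polyStd (m n : nat) (M : 'M[R]_(m, n)) (r : 'cV[R]_m) : 'cV[R]_n -> Prop :=
  fun z => M *m z = r /\ (forall i, 0 <= z i ord0).

Variable n : nat.
Implicit Types (P : 'cV[R]_n -> Prop) (v w p q : 'cV[R]_n).

Definition is_vertex P v : Prop :=
  P v /\ forall p q (t : R), P p -> P q -> 0 < t < 1 ->
          v = t *: p + (1 - t) *: q -> p = q.

Definition segment v w : 'cV[R]_n -> Prop :=
  fun z => exists t : R, 0 <= t <= 1 /\ z = t *: v + (1 - t) *: w.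

(* v, w adjacent: distinct vertices whose segment conv{v,w} is a face of P
   (extreme subset), i.e. an edge (1-dimensional face) of P. *)
Definition adjacent P v w : Prop :=
  [/\ is_vertex P v, is_vertex P w, v <> w &
      forall p q (t : R), P p -> P q -> 0 < t < 1 ->
        segment v w (t *: p + (1 - t) *: q) -> segment v w p /\ segment v w q].

Definition walk_dist_le P v w (k : nat) : Prop :=
  exists (l : nat) (f : nat -> 'cV[R]_n),
    [/\ (l <= k)%N, f 0%N = v, f l = w &
        forall i, (i < l)%N -> adjacent P (f i) (f i.+1)].

Definition diam_le P (D : nat) : Prop :=
  forall v w, is_vertex P v -> is_vertex P w -> walk_dist_le P v w D.

Definition std_nondegenerate (m : nat) (M : 'M[R]_(m, n)) (r : 'cV[R]_m) : Prop :=
  forall z, is_vertex (polyStd M r) z -> #|[set i | z i ord0 != 0]| = \rank M.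
End Polyhedra.

Definition matdiam_le (R : realFieldType) (m n : nat) (M : 'M[R]_(m, n)) (D : nat) :=
  forall r : 'cV[R]_m, diam_le (polyStd M r) D.

Section ThreeSum.
Variables (R : realFieldType) (m1 n1 m2 n2 : nat).
Variables (A : 'M[R]_(m1, n1)) (a1 a2 : 'rV[R]_n1) (b1 b2 : 'rV[R]_n2)
          (B : 'M[R]_(m2, n2)) (cA : 'cV[R]_m1) (cB : 'cV[R]_m2)
          (ca1 ca2 cb1 cb2 : R).

(* Constraint matrix of S, acting on z = col_mx x y:
     [ A  0  ]
     [ a1 b1 ]
     [ a2 b2 ]
     [ 0  B  ] *)
Definition threesum_mx : 'M[R]_(m1 + (1 + (1 + m2)), n1 + n2) :=
  col_mx (row_mx A 0)
    (col_mx (row_mx a1 b1) (col_mx (row_mx a2 b2) (row_mx 0 B))).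

Definition threesum_rhs : 'cV[R]_(m1 + (1 + (1 + m2))) :=
  col_mx cA (col_mx (ca1 + cb1)%:M (col_mx (ca2 + cb2)%:M cB)).

Definition S3 := polyStd threesum_mx threesum_rhs.

Definition Bbar : 'M[R]_(1 + (1 + m2), n2) := col_mx b1 (col_mx b2 B).

Definition is_xvertex (x : 'cV[R]_n1) (y : 'cV[R]_n2) : Prop :=
  is_vertex S3 (col_mx x y) /\ is_vertex (polyStd A cA) x.
End ThreeSum.

From mathcomp Require Import all_boot all_order all_algebra.

(* Fixing the P_A-component of S at a vertex x of P_A cuts out a face of S:
   a convex combination of two points of S whose x-part is x forces both
   x-parts to be x, since x is extreme in P_A and the projection of S lies
   in P_A.  This face is an affine copy, via y |-> (x, y), of the polyhedron
   {y : Bbar y = r(x), y >= 0}, where r(x) moves the a-terms of the linking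
   rows to the right-hand side.  Vertices and edges of a face are vertices
   and edges of S, so every edge walk of that polyhedron, of length at most
   d(Bbar), lifts to an edge walk of S. *)

Set Implicit Arguments. Unset Strict Implicit. Unset Printing Implicit Defensive.
Import Order.TTheory GRing.Theory Num.Theory.
Local Open Scope ring_scope.

Section ConvexCombinations.
Variable R : realFieldType.

Lemma convex_comb_id m (t : R) (a : 'cV[R]_m) : t *: a + (1 - t) *: a = a.
Proof. by rewrite -scalerDl addrC subrK scale1r. Qed.

Lemma convex_comb_col_mx m1 m2 (t : R) (a c : 'cV[R]_m1) (b d : 'cV[R]_m2) :
  t *: col_mx a b + (1 - t) *: col_mx c d =
  col_mx (t *: a + (1 - t) *: c) (t *: b + (1 - t) *: d).
Proof. by rewrite !scale_col_mx add_col_mx. Qed.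

Lemma segment_col_mx m1 m2 (x : 'cV[R]_m1) (v w u : 'cV[R]_m2) :
  segment (col_mx x v) (col_mx x w) (col_mx x u) <-> segment v w u.
Proof.
split=> -[s [hs e]]; exists s; split=> //.
  by move: e; rewrite convex_comb_col_mx convex_comb_id => /eq_col_mx [].
by rewrite convex_comb_col_mx convex_comb_id e.
Qed.

Lemma segment_col_mx_usubmx m1 m2 (x : 'cV[R]_m1) (v w : 'cV[R]_m2) z :
  segment (col_mx x v) (col_mx x w) z -> usubmx z = x.
Proof. by case=> s [_ ->]; rewrite convex_comb_col_mx convex_comb_id col_mxKu. Qed.

End ConvexCombinations.

Section SliceLift.
Variables (R : realFieldType) (n1 n2 : nat).
Variables (P : 'cV[R]_(n1 + n2) -> Prop) (x : 'cV[R]_n1) (Q : 'cV[R]_n2 -> Prop).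

Definition extreme_slice :=
  forall p q (t : R), P p -> P q -> 0 < t < 1 ->
    usubmx (t *: p + (1 - t) *: q) = x -> usubmx p = x /\ usubmx q = x.

Lemma extreme_slice_vertex (P1 : 'cV[R]_n1 -> Prop) :
  (forall z, P z -> P1 (usubmx z)) -> is_vertex P1 x -> extreme_slice.
Proof.
move=> proj [_ extr] p q t Pp Pq ht; rewrite linearD !linearZ /= => e.
have epq := extr _ _ _ (proj _ Pp) (proj _ Pq) ht (esym e).
by rewrite -e -epq convex_comb_id.
Qed.

Hypothesis PQ : forall y, P (col_mx x y) <-> Q y.

Lemma is_vertex_section y : is_vertex P (col_mx x y) -> is_vertex Q y.
Proof.
case=> /PQ Qy extr; split=> // p q t Qp Qq ht e.
have := extr _ _ _ (proj2 (PQ p) Qp) (proj2 (PQ q) Qq) ht.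
by rewrite convex_comb_col_mx convex_comb_id -e => /(_ erefl) /eq_col_mx [].
Qed.

Hypothesis slice_extreme : extreme_slice.

Lemma extreme_slice_split p q (t : R) : P p -> P q -> 0 < t < 1 ->
    usubmx (t *: p + (1 - t) *: q) = x ->
  [/\ p = col_mx x (dsubmx p), q = col_mx x (dsubmx q), Q (dsubmx p) & Q (dsubmx q)].
Proof.
move=> Pp Pq ht /(slice_extreme Pp Pq ht) [up uq].
have ep : p = col_mx x (dsubmx p) by rewrite -up vsubmxK.
have eq : q = col_mx x (dsubmx q) by rewrite -uq vsubmxK.
by split=> //; apply/PQ; rewrite -?ep -?eq.
Qed.

Lemma is_vertex_lift y : is_vertex Q y -> is_vertex P (col_mx x y).
Proof.
case=> Qy extr; split=> [|p q t Pp Pq ht e]; first exact/PQ.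
have [|ep eq Qp Qq] := extreme_slice_split Pp Pq ht; first by rewrite -e col_mxKu.
move: e; rewrite ep eq convex_comb_col_mx convex_comb_id => /eq_col_mx [_ e].
by rewrite (extr _ _ _ Qp Qq ht e).
Qed.

Lemma adjacent_lift v w : adjacent Q v w -> adjacent P (col_mx x v) (col_mx x w).
Proof.
case=> Vv Vw nvw edge; split; [exact: is_vertex_lift | exact: is_vertex_lift | |].
  by move=> /eq_col_mx [].
move=> p q t Pp Pq ht seg.
have [|ep eq Qp Qq] := extreme_slice_split Pp Pq ht.
  exact: segment_col_mx_usubmx seg.
move: seg; rewrite ep eq convex_comb_col_mx convex_comb_id => /segment_col_mx seg.
have [segp segq] := edge _ _ _ Qp Qq ht seg.
by split; apply/segment_col_mx.
Qed.

Lemma walk_dist_le_lift y y' k :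
  walk_dist_le Q y y' k -> walk_dist_le P (col_mx x y) (col_mx x y') k.
Proof.
case=> l [f [lk f0 fl fadj]]; exists l, (fun i => col_mx x (f i)).
by split=> [||| i /fadj]; rewrite ?f0 ?fl //; apply: adjacent_lift.
Qed.

End SliceLift.

Section ThreeSum.
Variables (R : realFieldType) (m1 n1 m2 n2 : nat).
Variables (A : 'M[R]_(m1, n1)) (a1 a2 : 'rV[R]_n1) (b1 b2 : 'rV[R]_n2)
          (B : 'M[R]_(m2, n2)) (cA : 'cV[R]_m1) (cB : 'cV[R]_m2)
          (ca1 ca2 cb1 cb2 : R).

Let S := S3 A a1 a2 b1 b2 B cA cB ca1 ca2 cb1 cb2.

Definition Bbar_rhs (x : 'cV[R]_n1) : 'cV[R]_(1 + (1 + m2)) :=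
  col_mx ((ca1 + cb1)%:M - a1 *m x) (col_mx ((ca2 + cb2)%:M - a2 *m x) cB).

Lemma nonneg_col_mx (x : 'cV[R]_n1) (y : 'cV[R]_n2) :
  (forall i, 0 <= col_mx x y i ord0) <->
  (forall i, 0 <= x i ord0) /\ (forall i, 0 <= y i ord0).
Proof.
split=> [nn | [nnx nny] i].
  by split=> i; [have := nn (lshift n2 i) | have := nn (rshift n1 i)];
     rewrite (col_mxEu, col_mxEd).
by rewrite -(splitK i); case: (split i) => j /=; rewrite (col_mxEu, col_mxEd).
Qed.

Lemma S3_col_mxP (x : 'cV[R]_n1) (y : 'cV[R]_n2) :
  S (col_mx x y) <-> polyStd A cA x /\ polyStd (Bbar b1 b2 B) (Bbar_rhs x) y.
Proof.
rewrite /S /S3 /polyStd /threesum_mx /threesum_rhs /Bbar /Bbar_rhs.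
rewrite !mul_col_mx !mul_row_col !mul0mx add0r addr0.
split.
  case=> /eq_col_mx [eA /eq_col_mx [e1 /eq_col_mx [e2 eB]]] /nonneg_col_mx [nnx nny].
  by split; split=> //; rewrite -e1 -e2 !(addrAC _ _ (- _)) !subrr !add0r eB.
case=> [[eA nnx] [/eq_col_mx [e1 /eq_col_mx [e2 eB]] nny]].
split; last exact/nonneg_col_mx.
by rewrite eA e1 e2 eB !(addrC (_ *m x)) !subrK.
Qed.

Lemma S3_usubmx z : S z -> polyStd A cA (usubmx z).
Proof. by rewrite -(vsubmxK z) => /S3_col_mxP []; rewrite col_mxKu. Qed.

Lemma S3_section x : polyStd A cA x ->
  forall y, S (col_mx x y) <-> polyStd (Bbar b1 b2 B) (Bbar_rhs x) y.
Proof.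
by move=> Ax y; split=> [/S3_col_mxP [] | By] //; apply/S3_col_mxP.
Qed.

End ThreeSum.

Theorem lemma7 (R : realFieldType) (m1 n1 m2 n2 : nat)
  (A : 'M[R]_(m1, n1)) (a1 a2 : 'rV[R]_n1) (b1 b2 : 'rV[R]_n2)
  (B : 'M[R]_(m2, n2)) (cA : 'cV[R]_m1) (cB : 'cV[R]_m2)
  (ca1 ca2 cb1 cb2 : R)
  (Hsimple : std_nondegenerate (threesum_mx A a1 a2 b1 b2 B)
                           (threesum_rhs cA cB ca1 ca2 cb1 cb2))
  (x : 'cV[R]_n1) (y y' : 'cV[R]_n2)
  (Hxy : is_xvertex A a1 a2 b1 b2 B cA cB ca1 ca2 cb1 cb2 x y)
  (Hxy' : is_xvertex A a1 a2 b1 b2 B cA cB ca1 ca2 cb1 cb2 x y')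
  (D : nat) (HD : matdiam_le (Bbar b1 b2 B) D) :
  walk_dist_le (S3 A a1 a2 b1 b2 B cA cB ca1 ca2 cb1 cb2)
               (col_mx x y) (col_mx x y') D.
Proof.
case: Hxy Hxy' => [Sy Ax] [Sy' _].
have fiber := S3_section a1 a2 b1 b2 B cB ca1 ca2 cb1 cb2 Ax.1.
apply: (walk_dist_le_lift fiber).
  by apply: extreme_slice_vertex Ax => z; apply: S3_usubmx.
apply: (HD _ y y').
- exact: is_vertex_section fiber _ Sy.
- exact: is_vertex_section fiber _ Sy'.
Qed.
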